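(* There exist constants $K,k,D>0$ such that for all positive integers $n\ge m$ there exists an indexed family $\mathcal F=(f_1,\dots,f_T)$ of functions $f_i\colon\mathbb B^n\to\mathbb B^m$ with $T\le K\,2^m n^k$ having the following property: for every $b\in\mathbb B^m$ and every set of indices $I\subseteq\{1,\dots,T\}$ with $\#I\ge T/2$, $$\#\{a\in\mathbb B^n : f_i(a)\ne b \text{ for all } i\in I\}\le D\cdot 2^m.$$
   Context: $\mathbb B^k$ denotes the set of binary strings of length $k$. *)

From mathcomp Require Import all_boot.
From Stdlib Require Import Reals.
Set Implicit Arguments. Unset Strict Implicit. Unset Printing Implicit Defensive.

Notation Bstr n := (n.-tuple bool).

Definition missed (n m T : nat) (F : 'I_T -> Bstr n -> Bstr m)
  (I : {set 'I_T}) (b : Bstr m) : nat :=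
  #|[set a : Bstr n | [forall i in I, F i a != b]]|.

From mathcomp Require Import all_boot zify.
From Stdlib Require Import Reals Lra.
Import ssrnat.
Set Implicit Arguments. Unset Strict Implicit. Unset Printing Implicit Defensive.

(* Proof by the probabilistic method, phrased as counting.
   Write x = 2^m, N = 4x (the exceptional-set size), s = (2n+1)x and T = 2s.
   Call a family F = (f_1, ..., f_T) of maps B^n -> B^m bad if some N-set
   M of inputs and some output b are such that at least s of the f_i avoid b
   on all of M.  For fixed M and b, a single uniform map avoids b on M with
   probability (1 - 1/x)^N <= 1/16, so (choosing which s indices avoid) at
   most 2^T 16^(-s) of all families are bad for (M, b); summing over the
   C(2^n, N) <= 2^(nN) sets M and the x outputs b still leaves a fraction
   < 1, because nN + m + T < 4s.  Hence a good family exists.  For a good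
   family and |I| >= T/2 = s, no N inputs can all be missed by every f_i
   (i in I), so fewer than N + 1 inputs are missed; this gives
   K = 6, k = 1, D = 4.
   The file first proves the general counting facts (union bound, number of
   constrained functions, tail bound for "many hits"), then the numerical
   inequalities, then the construction for fixed n and m, and finally the
   theorem. *)

Lemma card_bigcup_le (I T : finType) (P : pred I) (S : I -> {set T}) :
  #|\bigcup_(i | P i) S i| <= \sum_(i | P i) #|S i|.
Proof.
apply: (big_ind2 (fun (A : {set T}) k => #|A| <= k)) => [|A1 k1 A2 k2 h1 h2|//].
  by rewrite cards0.
exact: leq_trans (leq_card_setU A1 A2) (leq_add h1 h2).
Qed.

Lemma card_ffun_constrained (aT rT : finType) (S : {set aT}) (P : pred rT) :
  #|[set f : {ffun aT -> rT} | [forall x in S, P (f x)]]|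
    = #|P| ^ #|S| * #|rT| ^ (#|aT| - #|S|).
Proof.
pose F x := if x \in S then P else predT.
have -> : #|[set f : {ffun aT -> rT} | [forall x in S, P (f x)]]|
    = #|(finfun.family F : simpl_pred {ffun aT -> rT})|.
  apply: eq_card => f; rewrite inE.
  by apply/forallP/familyP => h x; have := h x; rewrite /F; case: (x \in S).
rewrite card_family foldrE big_map big_enum (bigID (mem S)) /=.
rewrite (eq_bigr (fun=> #|P|)) => [|x]; last by rewrite /F => ->.
rewrite [X in _ * X](eq_bigr (fun=> #|rT|)) => [|x]; last by rewrite /F => /negbTE ->.
rewrite !prod_nat_const -[#|[pred x | x \notin S]|]/#|[predC S]|.
by rewrite -(cardC S) addKn.
Qed.

Lemma leq_exp_base (a b e : nat) : a <= b -> a ^ e <= b ^ e.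
Proof. by case: e => [|e] // le_ab; rewrite leq_exp2r. Qed.

Lemma leq_exp_trade (p u s S T : nat) : p <= u -> s <= S -> S <= T ->
  p ^ S * u ^ (T - S) <= p ^ s * u ^ (T - s).
Proof.
move=> le_pu le_sS le_ST.
have -> : T - s = (S - s) + (T - S) by lia.
rewrite -{1}(subnKC le_sS) !expnD -!mulnA leq_mul2l leq_mul2r.
by rewrite leq_exp_base ?orbT.
Qed.

(* Tail bound: among maps F : I -> U, those with at least s coordinates in P
   are at most 2^#|I| * #|P|^s * #|U|^(#|I|-s), by a union over the possible
   sets of s or more such coordinates. *)
Lemma card_many_hits (I U : finType) (P : pred U) (s : nat) : s <= #|I| ->
  #|[set F : {ffun I -> U} | s <= #|[set i | P (F i)]|]|
    <= 2 ^ #|I| * (#|P| ^ s * #|U| ^ (#|I| - s)).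
Proof.
move=> le_sI.
pose hits (S : {set I}) := [set F : {ffun I -> U} | [forall i in S, P (F i)]].
have cover : [set F : {ffun I -> U} | s <= #|[set i | P (F i)]|]
    \subset \bigcup_(S : {set I} | s <= #|S|) hits S.
  apply/subsetP => F; rewrite inE => hF; apply/bigcupP.
  by exists [set i | P (F i)] => //; rewrite inE; apply/forall_inP => i; rewrite inE.
have card_hits (S : {set I}) : s <= #|S| -> #|hits S| <= #|P| ^ s * #|U| ^ (#|I| - s).
  by move=> le_sS; rewrite card_ffun_constrained leq_exp_trade ?max_card.
apply: leq_trans (subset_leq_card cover) _.
apply: leq_trans (card_bigcup_le _ _) _.
apply: (@leq_trans (\sum_(S : {set I}) #|P| ^ s * #|U| ^ (#|I| - s))).
  by rewrite big_mkcond; apply: leq_sum => S _; case: ifP => // /card_hits.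
have card_sets : #|{set I}| = 2 ^ #|I|.
  by rewrite -(cardsT {set I}) -powersetT card_powerset cardsT.
by rewrite sum_nat_const card_sets.
Qed.

Lemma bernoulli_nat (x k : nat) : x ^ k.+1 + k.+1 * x ^ k <= x.+1 ^ k.+1.
Proof.
elim: k => [|k IH]; first by rewrite expn1 expn0; lia.
rewrite [x.+1 ^ k.+2]expnS [x ^ k.+2]expnS [x ^ k.+1]expnS.
move: IH; rewrite expnS; move: (x ^ k) (x.+1 ^ k.+1) => a b IH; nia.
Qed.

(* (1 - 1/x)^x <= 1/2 for x >= 1, in integer form. *)
Lemma two_pred_pow_le (x : nat) : 0 < x -> 2 * x.-1 ^ x <= x ^ x.
Proof.
case: x => [//|y] _ /=; apply: leq_trans (bernoulli_nat y y).
by rewrite mul2n -addnn leq_add2l expnS leq_mul2r leqnSn orbT.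
Qed.

Lemma bin_le_exp (x k : nat) : 'C(x, k) <= x ^ k.
Proof.
apply: (@leq_trans (x ^_ k)); first by rewrite -bin_ffact leq_pmulr ?fact_gt0.
have -> : x ^ k = \prod_(i < k) x by rewrite prod_nat_const card_ord.
by rewrite ffact_prod; apply: leq_prod => i _; rewrite leq_subr.
Qed.

Definition avoids (aT rT : finType) (M : {set aT}) (b : rT) : pred {ffun aT -> rT} :=
  fun f => [forall a in M, f a != b].

Lemma card_avoids (aT rT : finType) (M : {set aT}) (b : rT) :
  #|avoids M b| = #|rT|.-1 ^ #|M| * #|rT| ^ (#|aT| - #|M|).
Proof.
rewrite -(cardC1 b) -(card_ffun_constrained M (predC1 b)).
by apply: eq_card => f; rewrite inE.
Qed.

Section RandomFamily.
Variables n m : nat.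

(* exc_size = N bounds the number of missed inputs, quota = s is the
   threshold number of avoiding maps, and fam_size = T = 2s. *)
Definition exc_size : nat := 4 * 2 ^ m.
Definition quota : nat := (2 * n + 1) * 2 ^ m.
Definition fam_size : nat := 2 * quota.

Local Notation nfun := ((2 ^ m) ^ (2 ^ n)).
Local Notation navoid := ((2 ^ m).-1 ^ exc_size * (2 ^ m) ^ (2 ^ n - exc_size)).

Lemma avoiders_rare : exc_size <= 2 ^ n -> 16 * navoid <= nfun.
Proof.
move=> le_N; rewrite -{2}(subnKC le_N) expnD mulnA leq_mul2r; apply/orP; right.
have := leq_exp_base 4 (two_pred_pow_le (expn_gt0 2 m)).
by rewrite expnMn -!expnM /exc_size (mulnC 4).
Qed.

(* The number of pairs (M, b) times 2^T is beaten by 16^s, as nN + m + T < 4s. *)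
Lemma exponent_budget : 'C(2 ^ n, exc_size) * (2 ^ m * 2 ^ fam_size) < 16 ^ quota.
Proof.
apply: (@leq_ltn_trans (2 ^ (n * exc_size) * (2 ^ m * 2 ^ fam_size))).
  by rewrite leq_mul2r expnM bin_le_exp orbT.
rewrite -!expnD -[16]/(2 ^ 4) -expnM ltn_exp2l //.
have := ltn_expl m (isT : 1 < 2); rewrite /fam_size /quota /exc_size.
move: (2 ^ m) => e; nia.
Qed.

Lemma bad_count_lt_total :
  'C(2 ^ n, exc_size) * (2 ^ m * (2 ^ fam_size *
     (navoid ^ quota * nfun ^ (fam_size - quota)))) < nfun ^ fam_size.
Proof.
have nfun_gt0 : 0 < nfun by rewrite !expn_gt0.
have [lt_N|le_N] := ltnP (2 ^ n) exc_size.
  by rewrite bin_small // mul0n expn_gt0 nfun_gt0.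
have -> : nfun ^ fam_size = nfun ^ quota * nfun ^ (fam_size - quota).
  by rewrite -expnD subnKC // /fam_size leq_pmull.
rewrite !mulnA ltn_pmul2r; last by rewrite expn_gt0 nfun_gt0.
rewrite -(mulnA _ (2 ^ m)).
have [->|navoid_gt0] := posnP (navoid ^ quota).
  by rewrite muln0 expn_gt0 nfun_gt0.
apply: (@leq_trans (16 ^ quota * navoid ^ quota)).
  by rewrite ltn_pmul2r // exponent_budget.
by rewrite -expnMn leq_exp_base // avoiders_rare.
Qed.

Lemma good_family_exists :
  exists F : {ffun 'I_fam_size -> {ffun Bstr n -> Bstr m}},
    forall (M : {set Bstr n}) (b : Bstr m), #|M| = exc_size ->
      #|[set i | avoids M b (F i)]| < quota.
Proof.
pose U := {ffun Bstr n -> Bstr m}.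
pose Bad := \bigcup_(M : {set Bstr n} | #|M| == exc_size) \bigcup_(b : Bstr m)
  [set F : {ffun 'I_fam_size -> U} | quota <= #|[set i | avoids M b (F i)]|].
have card_U : #|U| = nfun by rewrite card_ffun !card_tuple card_bool.
have card_Bad : #|Bad| < #|[set: {ffun 'I_fam_size -> U}]|.
  rewrite cardsT card_ffun card_ord card_U; apply: leq_ltn_trans bad_count_lt_total.
  apply: leq_trans (card_bigcup_le _ _) _.
  set c := 2 ^ fam_size * _.
  have card_bad_Mb (M : {set Bstr n}) (b : Bstr m) : #|M| = exc_size ->
      #|[set F : {ffun 'I_fam_size -> U} | quota <= #|[set i | avoids M b (F i)]|]| <= c.
    move=> card_M; apply: leq_trans (card_many_hits _ _) _.
      by rewrite card_ord /fam_size leq_pmull.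
    by rewrite card_avoids card_U card_M !card_tuple card_bool card_ord.
  apply: (@leq_trans (\sum_(M : {set Bstr n} | #|M| == exc_size) 2 ^ m * c)).
    apply: leq_sum => M /eqP card_M; apply: leq_trans (card_bigcup_le _ _) _.
    have -> : 2 ^ m * c = \sum_(b : Bstr m) c by rewrite sum_nat_const card_tuple card_bool.
    by apply: leq_sum => b _; apply: card_bad_Mb.
  have -> : \sum_(M : {set Bstr n} | #|M| == exc_size) 2 ^ m * c
      = \sum_(M in [set M : {set Bstr n} | #|M| == exc_size]) 2 ^ m * c.
    by apply: eq_bigl => M; rewrite inE.
  by rewrite sum_nat_const card_draws card_tuple card_bool.
have /subsetPn [F _ F_good] : ~~ ([set: {ffun 'I_fam_size -> U}] \subset Bad).
  by apply: contraTN card_Bad => /subset_leq_card; rewrite -leqNgt.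
exists F => M b card_M; rewrite ltnNge; apply: contra F_good => many_avoid.
apply/bigcupP; exists M; first by rewrite card_M.
by apply/bigcupP; exists b => //; rewrite inE.
Qed.
End RandomFamily.

(* A good family misses at most N inputs on any index set of size >= s:
   otherwise N of the missed inputs form a set avoided by every F i, i in I. *)
Lemma missed_le_of_good (n m T N s : nat) (F : 'I_T -> {ffun Bstr n -> Bstr m}) :
  (forall (M : {set Bstr n}) (b : Bstr m), #|M| = N ->
     #|[set i | avoids M b (F i)]| < s) ->
  forall (I : {set 'I_T}) (b : Bstr m), s <= #|I| ->
    missed (fun i a => F i a) I b <= N.
Proof.
move=> good I b le_sI; rewrite leqNgt; apply/negP.
move=> /ltnW /card_geqP[ms [ms_uniq ms_size ms_sub]].
have card_M : #|[set a in ms]| = N by rewrite cardsE (card_uniqP ms_uniq) ms_size.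
have sub_I : I \subset [set i | avoids [set a in ms] b (F i)].
  apply/subsetP => i iI; rewrite inE; apply/forall_inP => a; rewrite inE => /ms_sub.
  by rewrite inE => /forall_inP /(_ i iI).
by have := leq_trans le_sI (subset_leq_card sub_I); rewrite leqNgt good.
Qed.

Lemma INR_muln (a b : nat) : INR (a * b) = (INR a * INR b)%R.
Proof. exact: mult_INR. Qed.

Lemma INR_expn (a k : nat) : INR (a ^ k) = (INR a ^ k)%R.
Proof. by elim: k => [|k IH] //; rewrite expnS INR_muln IH. Qed.

Theorem mainTheorem5 :
  exists K k D : R, (0 < K)%R /\ (0 < k)%R /\ (0 < D)%R /\
    forall n m : nat, (0 < m)%N -> (m <= n)%N ->
      exists (T : nat) (F : 'I_T -> Bstr n -> Bstr m),
        (INR T <= K * 2 ^ m * Rpower (INR n) k)%R /\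
        forall (b : Bstr m) (I : {set 'I_T}),
          (INR T / 2 <= INR #|I|)%R ->
          (INR (missed F I b) <= D * 2 ^ m)%R.
Proof.
exists 6%R, 1%R, 4%R; do 3!(split; first lra).
move=> n m m_gt0 le_mn; have n_gt0 : (0 < n)%N := leq_trans m_gt0 le_mn.
have [F F_good] := good_family_exists n m.
exists (fam_size n m), (fun i a => F i a); split.
  (* T = (4n + 2) 2^m <= 6 n 2^m since n >= 1. *)
  have le_T : (fam_size n m <= 6 * 2 ^ m * n)%N.
    by rewrite /fam_size /quota; move: (2 ^ m) => e; nia.
  apply: Rle_trans (le_INR _ _ (leP le_T)) _.
  rewrite Rpower_1; last exact: (lt_0_INR _ (ltP n_gt0)).
  by rewrite !INR_muln INR_expn (INR_IZR_INZ 2) (INR_IZR_INZ 6); apply: Rle_refl.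
move=> b I half_I.
have le_sI : (quota n m <= #|I|)%N.
  apply/leP/INR_le; move: half_I; rewrite /fam_size INR_muln /=; lra.
apply: Rle_trans (le_INR _ _ (leP (missed_le_of_good F_good b le_sI))) _.
by rewrite /exc_size INR_muln INR_expn (INR_IZR_INZ 2) (INR_IZR_INZ 4); apply: Rle_refl.
Qed.
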